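(* Let $V$ be a finite-dimensional $\Bbbk$-vector space and $R$ a finite scheme of length $r$ admitting a closed embedding $i_1\colon R\hookrightarrow\mathbb P V$. Then there exists a closed embedding $i_2\colon R\hookrightarrow\mathbb P V$ such that $\dim_\Bbbk\big(V^*/I(i_2(R))_1\big)=\min\{r,\dim V\}$.
   Context: $\Bbbk$ algebraically closed. $V^*=H^0(\mathbb PV,\mathcal O(1))$ and $I(i_2(R))_1\subset V^*$ is the space of linear forms vanishing on $i_2(R)$. *)

From HB Require Import structures.
From mathcomp Require Import all_boot all_order all_algebra all_field.
Set Implicit Arguments. Unset Strict Implicit. Unset Printing Implicit Defensive.
Import GRing.Theory.
Local Open Scope ring_scope.

(* Model of finite schemes and their closed embeddings into P V.
   - A finite k-scheme R = Spec A is modelled by a (nonzero) commutative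
     finite-dimensional k-algebra A (an falgType k with commutative product);
     its length is \dim {:A}.
   - V^* = H^0(P V, O(1)) is 'Hom(V, k^o) (linear forms on V).
   - A morphism Spec A -> P V is given (Pic A = 0 since A is semilocal) by a
     k-linear map phi : V^* -> A whose image generates the unit ideal; for k
     infinite some linear form l has phi l a unit, so the morphism lands in the
     affine chart D(l) = Spec k[V^*/l], where it corresponds to the k-algebra map
     m/l |-> phi m * (phi l)^-1.  It is a closed embedding iff this algebra map
     is surjective, i.e. the values phi m / phi l generate A as a k-algebra. *)
Definition dual (k : fieldType) (V : vectType k) := 'Hom(V, k^o).

Definition closed_embedding (k : fieldType) (V : vectType k) (A : falgType k)
  (phi : 'Hom(dual V, A)) : Prop :=
  exists l : dual V, phi l \is a GRing.unit /\
    agenv (<[(phi l)^-1]> * limg phi)%VS = fullv.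

(* I(i(R))_1 : linear forms vanishing on the image of R, i.e. with phi m = 0. *)
Definition linear_forms_vanishing (k : fieldType) (V : vectType k) (A : falgType k)
  (phi : 'Hom(dual V, A)) : {vspace dual V} := lker phi.

Definition quot_dim (k : fieldType) (V : vectType k) (W : {vspace dual V}) : nat :=
  (\dim {: dual V} - \dim W)%N.

(* A closed embedding Spec A -> P V is a linear map phi : V^* -> A such that
   phi l is a unit for some l and the values phi m / phi l generate A. Enlarging
   the image of phi while keeping the value at l preserves this property, and
   dim V^*/I_1 is the rank of phi. So it suffices to raise the rank of i1 to
   min(dim A, dim V) without changing i1 l: as long as the rank is smaller, some
   nonzero v lies in the kernel and some a outside the image, and adding a
   rank-one map that kills l and sends v to a raises the rank by one. *)
From HB Require Import structures.
From mathcomp Require Import all_boot all_order all_algebra all_field.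
Set Implicit Arguments. Unset Strict Implicit. Unset Printing Implicit Defensive.
Import GRing.Theory.
Local Open Scope ring_scope.

Section RankOneMap.
Variables (k : fieldType) (U W : vectType k) (phi : {scalar U}) (w : W).

Definition rank_one (x : U) : W := phi x *: w.

Fact rank_one_is_linear : linear rank_one.
Proof. by move=> c x y; rewrite /rank_one linearP scalerDl scalerA. Qed.

HB.instance Definition _ :=
  GRing.isLinear.Build k U W _ rank_one rank_one_is_linear.

Lemma rank_one_lfunE x : linfun rank_one x = phi x *: w.
Proof. by rewrite lfunE. Qed.

End RankOneMap.

Section RaiseRank.
Variables (k : fieldType) (U W : vectType k).
Implicit Types (f : 'Hom(U, W)) (l : U).

Lemma dim_lker_limg f : (\dim (lker f) + \dim (limg f))%N = \dim {:U}.
Proof. by rewrite -(limg_ker_dim f fullv) capfv. Qed.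

Lemma dim_limg_leq_min f : (\dim (limg f) <= minn (\dim {:W}) (\dim {:U}))%N.
Proof. by rewrite leq_min dimvS ?subvf //= -(dim_lker_limg f) leq_addl. Qed.

Lemma limg_adjoin_vector f l v a : f l != 0 -> v \in lker f -> v != 0 ->
  exists g : 'Hom(U, W), [/\ g l = f l, (limg f <= limg g)%VS & a \in limg g].
Proof.
move=> fl_neq0 v_ker v_neq0.
have fv0 : f v = 0 by apply/eqP; rewrite -memv_ker.
have free_lv : free [tuple l; v].
  rewrite /= free_cons span_seq1 seq1_free v_neq0 andbT.
  apply: contra fl_neq0 => /vlineP[c ->].
  by rewrite linearZ /= fv0 scaler0.
have coord_l : coord [tuple l; v] 1 l = 0 by rewrite (coord_free 0).
have coord_v : coord [tuple l; v] 1 v = 1 by rewrite (coord_free 1).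
pose g := f + linfun (rank_one (coord [tuple l; v] 1) a).
have gv : g v = a.
  by rewrite add_lfunE rank_one_lfunE /= fv0 coord_v add0r scale1r.
exists g; split.
- by rewrite add_lfunE rank_one_lfunE /= coord_l scale0r addr0.
- apply/subvP => _ /memv_imgP[x _ ->].
  have -> : f x = g x - coord [tuple l; v] 1 x *: g v.
    by rewrite add_lfunE rank_one_lfunE /= gv addrK.
  by rewrite memvB ?memvZ ?memv_img ?memvf.
- by rewrite -gv memv_img ?memvf.
Qed.

Lemma limg_raise_rank f l : f l != 0 ->
  (\dim (limg f) < minn (\dim {:W}) (\dim {:U}))%N ->
  exists g : 'Hom(U, W), [/\ g l = f l, (limg f <= limg g)%VS
                           & \dim (limg f) < \dim (limg g)]%N.
Proof.
rewrite leq_min => fl_neq0 /andP[rk_ltW rk_ltU].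
have ker_neq0 : lker f != 0%VS.
  by rewrite -dimv_eq0 -lt0n -(ltn_add2r (\dim (limg f))) dim_lker_limg.
have compl_neq0 : ((limg f)^C)%VS != 0%VS.
  by rewrite -dimv_eq0 dimv_compl -lt0n subn_gt0.
set v := vpick (lker f); set a := vpick ((limg f)^C)%VS.
have v_neq0 : v != 0 by rewrite vpick0.
have a_notin : a \notin limg f.
  apply: contraNN compl_neq0 => a_in.
  by rewrite -vpick0 -memv0 -(capv_compl (limg f)) memv_cap a_in memv_pick.
have [g [gl sub_fg a_img]] := limg_adjoin_vector a fl_neq0 (memv_pick _) v_neq0.
exists g; split=> //.
rewrite (ltn_leqif (dimv_leqif_eq sub_fg)).
by apply: contraNneq a_notin => ->.
Qed.

Lemma limg_raise_rank_max f l : f l != 0 ->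
  exists g : 'Hom(U, W), [/\ g l = f l, (limg f <= limg g)%VS
                           & \dim (limg g) = minn (\dim {:W}) (\dim {:U})].
Proof.
set m := minn _ _; have [n] := ubnP (m - \dim (limg f)).
elim: n f => // n IHn f lt_n fl_neq0.
have [rk_lt | rk_ge] := ltnP (\dim (limg f)) m; last first.
  by exists f; split=> //; apply/eqP; rewrite eqn_leq dim_limg_leq_min.
have [g [gl sub_fg rk_fg]] := limg_raise_rank fl_neq0 rk_lt.
have [|h [hl sub_gh rk_h]] := IHn g (leq_trans (ltn_sub2l rk_lt rk_fg) lt_n).
  by rewrite gl.
by exists h; rewrite hl gl; split=> //; apply: subv_trans sub_fg sub_gh.
Qed.

End RaiseRank.

Lemma dim_dual (k : fieldType) (V : vectType k) : \dim {:dual V} = \dim {:V}.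
Proof. by rewrite !dimvf; apply: muln1. Qed.

Lemma quot_dim_lker (k : fieldType) (V : vectType k) (A : falgType k)
    (f : 'Hom(dual V, A)) :
  quot_dim (linear_forms_vanishing f) = \dim (limg f).
Proof. by rewrite /quot_dim /linear_forms_vanishing -(dim_lker_limg f) addKn. Qed.

Lemma closed_embedding_limgS (k : fieldType) (V : vectType k) (A : falgType k)
    (f g : 'Hom(dual V, A)) (l : dual V) :
  f l \is a GRing.unit -> agenv (<[(f l)^-1]> * limg f)%VS = fullv ->
  g l = f l -> (limg f <= limg g)%VS -> closed_embedding g.
Proof.
move=> fl_unit f_gen gl sub_fg; exists l; rewrite gl; split=> //.
by apply/eqP; rewrite eqEsubv subvf -{1}f_gen agenvS // prodvS.
Qed.

Theorem mainTheorem17 (k : closedFieldType) (V : vectType k) (A : falgType k)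
  (A_comm : forall x y : A, x * y = y * x)
  (i1 : 'Hom(dual V, A)) (hi1 : closed_embedding i1) :
  exists i2 : 'Hom(dual V, A), closed_embedding i2 /\
    quot_dim (linear_forms_vanishing i2) = minn (\dim {: A}) (\dim {: V}).
Proof.
have [l [i1l_unit i1_gen]] := hi1.
have i1l_neq0 : i1 l != 0 by apply: contraTneq i1l_unit => ->; rewrite unitr0.
have [i2 [i2l sub_i12 rk_i2]] := limg_raise_rank_max i1l_neq0.
exists i2; split; first exact: closed_embedding_limgS i1l_unit i1_gen i2l sub_i12.
by rewrite quot_dim_lker rk_i2 dim_dual.
Qed.
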